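(* Let $B=(B,+,0)$ be a unitary magma and $(X,\varphi)$ a $B$-action, with $X$ regarded as a unitary magma via $x+x'=\varphi(x,0,x',0)$ and neutral element $0$. (1) Let $Z$ be a unitary magma and $u\colon X\to Z$, $v\colon B\to Z$ morphisms of unitary magmas. There is at most one morphism $w\colon X\rtimes_\varphi B\to Z$ with $w(x,0)=u(x)$ for all $x\in X$ and $w(0,b)=v(b)$ for all $b\in B$; if it exists, then $w(x,b)=u(x)+v(b)$. Furthermore, the map $w(x,b)=u(x)+v(b)$ is a morphism of unitary magmas from $X\rtimes_\varphi B$ to $Z$ if and only if $$u(\varphi(x,b,x',b'))+v(b+b')=(u(x)+v(b))+(u(x')+v(b'))$$ for all $(x,b),(x',b')\in X\rtimes_\varphi B$. (2) Let $Z$ be a unitary magma, $f\colon Z\to X$ a map with $f(0)=0$, and $g\colon Z\to B$ a morphism of unitary magmas. Then the assignment $z\mapsto(f(z),g(z))$ is a morphism of unitary magmas from $Z$ to $X\rtimes_\varphi B$ if and only if $f(z_1+z_2)=\varphi(f(z_1),g(z_1),f(z_2),g(z_2))$ for all $z_1,z_2\in Z$.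
   Context: A unitary magma is a set with a binary operation $+$ and an element $0$ with $b+0=b=0+b$ for all $b$; morphisms preserve $+$ and $0$. A $B$-action is a pair $(X,\varphi)$ with $X$ a set and $\varphi\colon X\times B\times X\times B\to X$ a map such that: (1) there is an element $0\in X$ with $\varphi(x,0,0,0)=x=\varphi(0,0,x,0)$ for all $x\in X$; (2) $\varphi(x,b,0,0)=\varphi(x,0,0,b)=\varphi(0,0,x,b)$ for all $x\in X,b\in B$; (3) $\varphi(0,b,0,b')=0$ for all $b,b'\in B$; (4) writing $\varphi_{00}(x,b)=\varphi(x,0,0,b)$, for all $x,x'\in X$, $b,b'\in B$: $\varphi(x,b,x',b')=\varphi_{00}\big(\varphi(\varphi_{00}(x,b),b,\varphi_{00}(x',b'),b'),\,b+b'\big)$. The semidirect product $X\rtimes_\varphi B$ is the set $\{(x,b)\in X\times B\mid\varphi(x,0,0,b)=x\}$ with operation $(x,b)+(x',b')=(\varphi(x,b,x',b'),b+b')$ and neutral element $(0,0)$ (it is a unitary magma). *)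

From Stdlib Require Import ProofIrrelevance.
Set Implicit Arguments.

Record umagma := UMagma {
  ucar :> Type;
  uop : ucar -> ucar -> ucar;
  uzero : ucar;
  uop0r : forall b, uop b uzero = b;
  uop0l : forall b, uop uzero b = b
}.
Arguments uop {u} _ _.
Arguments uzero {u}.

Definition is_morph (M N : umagma) (f : M -> N) : Prop :=
  f uzero = uzero /\ forall a b, f (uop a b) = uop (f a) (f b).
Arguments is_morph {M N} f.

Record action (B : umagma) := Action {
  acar : Type;
  azero : acar;
  aphi : acar -> B -> acar -> B -> acar;
  ax1l : forall x, aphi x uzero azero uzero = x;
  ax1r : forall x, aphi azero uzero x uzero = x;
  ax2a : forall x b, aphi x b azero uzero = aphi x uzero azero b;
  ax2b : forall x b, aphi x uzero azero b = aphi azero uzero x b;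
  ax3 : forall b b', aphi azero b azero b' = azero;
  ax4 : forall x b x' b',
    aphi x b x' b' =
    aphi (aphi (aphi x uzero azero b) b (aphi x' uzero azero b') b')
         uzero azero (uop b b')
}.

Section Constructions.
Variables (B : umagma) (A : action B).

Definition phi00 (x : acar A) (b : B) : acar A := aphi A x uzero (azero A) b.

Definition X_magma : umagma :=
  @UMagma (acar A) (fun x x' => aphi A x uzero x' uzero) (azero A)
    (ax1l A) (ax1r A).

Definition sdp_car := { p : acar A * B | phi00 (fst p) (snd p) = fst p }.

Lemma phi00_idem (P : acar A) (c : B) : phi00 (phi00 P c) c = phi00 P c.
Proof.
  unfold phi00. pose proof (ax4 A P uzero (azero A) c) as H.
  rewrite (ax1l A P) in H. rewrite (ax3 A uzero c) in H. rewrite (uop0l B c) in H.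
  rewrite <- H. reflexivity.
Qed.

Lemma sdp_op_closed (p q : sdp_car) :
  phi00 (aphi A (fst (proj1_sig p)) (snd (proj1_sig p))
                (fst (proj1_sig q)) (snd (proj1_sig q)))
        (uop (snd (proj1_sig p)) (snd (proj1_sig q)))
  = aphi A (fst (proj1_sig p)) (snd (proj1_sig p))
           (fst (proj1_sig q)) (snd (proj1_sig q)).
Proof.
  rewrite (ax4 A). apply phi00_idem.
Qed.

Definition sdp_op (p q : sdp_car) : sdp_car :=
  exist _ (aphi A (fst (proj1_sig p)) (snd (proj1_sig p))
                  (fst (proj1_sig q)) (snd (proj1_sig q)),
           uop (snd (proj1_sig p)) (snd (proj1_sig q)))
        (sdp_op_closed p q).

Lemma sdp_zero_in : phi00 (fst (azero A, @uzero B)) (snd (azero A, @uzero B))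
                    = fst (azero A, @uzero B).
Proof. exact (ax1l A (azero A)). Qed.

Definition sdp_zero : sdp_car := exist _ (azero A, uzero) sdp_zero_in.

Lemma sdp_eq (p q : sdp_car) : proj1_sig p = proj1_sig q -> p = q.
Proof.
  destruct p as [p hp], q as [q hq]; simpl; intros E; subst q.
  f_equal. apply proof_irrelevance.
Qed.

Lemma sdp_op0r (p : sdp_car) : sdp_op p sdp_zero = p.
Proof.
  apply sdp_eq; destruct p as [[x b] hx]; simpl in *.
  rewrite (uop0r B b). unfold phi00 in hx. rewrite (ax2a A x b). rewrite hx. reflexivity.
Qed.

Lemma sdp_op0l (p : sdp_car) : sdp_op sdp_zero p = p.
Proof.
  apply sdp_eq; destruct p as [[x b] hx]; simpl in *.
  rewrite (uop0l B b). unfold phi00 in hx. 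
  rewrite <- (ax2b A x b). rewrite hx. reflexivity.
Qed.

Definition sdp : umagma := @UMagma sdp_car sdp_op sdp_zero sdp_op0r sdp_op0l.

Lemma sdp_inl_in (x : acar A) : phi00 (fst (x, @uzero B)) (snd (x, @uzero B)) = fst (x, @uzero B).
Proof. exact (ax1l A x). Qed.
Definition sdp_inl (x : acar A) : sdp := exist _ (x, uzero) (sdp_inl_in x).

Lemma sdp_inr_in (b : B) : phi00 (fst (azero A, b)) (snd (azero A, b)) = fst (azero A, b).
Proof. exact (ax3 A uzero b). Qed.
Definition sdp_inr (b : B) : sdp := exist _ (azero A, b) (sdp_inr_in b).

Definition sdp_fst (p : sdp) : acar A := fst (proj1_sig p).
Definition sdp_snd (p : sdp) : B := snd (proj1_sig p).

End Constructions.

(* Every element of the semidirect product splits as (x,b) = (x,0) + (0,b), so a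
   morphism out of it is determined by its restrictions u and v and must be
   w(x,b) = u(x) + v(b); that map preserves 0 automatically, so it is a morphism
   exactly when it preserves +.  A map z |-> (f z, g z) into the semidirect
   product preserves + exactly when f does so with respect to phi; in that case
   f(z) = f(z + 0) = phi(f z, g z, 0, 0) = phi(f z, 0, 0, g z), so (f z, g z)
   automatically lies in the semidirect product. *)

Section SemidirectProduct.
Variables (B : umagma) (A : action B).

Lemma sdp_decompose (p : sdp A) :
  p = uop (sdp_inl A (sdp_fst p)) (sdp_inr A (sdp_snd p)).
Proof.
  apply sdp_eq; destruct p as [[x b] hx]; simpl.
  unfold sdp_fst, sdp_snd, phi00 in *; simpl in *.
  now rewrite (uop0l B b), hx.
Qed.

Section MorphismsOut.
Variables (Z : umagma) (u : X_magma A -> Z) (v : B -> Z).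

Lemma additive_sdp_map_eq (w : sdp A -> Z) :
  (forall p q, w (uop p q) = uop (w p) (w q)) ->
  (forall x, w (sdp_inl A x) = u x) -> (forall b, w (sdp_inr A b) = v b) ->
  forall p, w p = uop (u (sdp_fst p)) (v (sdp_snd p)).
Proof.
  intros w_add w_inl w_inr p.
  rewrite <- w_inl, <- w_inr, <- w_add.
  exact (f_equal w (sdp_decompose p)).
Qed.

Lemma sdp_morph_unique (w1 w2 : sdp A -> Z) :
  is_morph w1 -> is_morph w2 ->
  (forall x, w1 (sdp_inl A x) = u x) -> (forall b, w1 (sdp_inr A b) = v b) ->
  (forall x, w2 (sdp_inl A x) = u x) -> (forall b, w2 (sdp_inr A b) = v b) ->
  forall p, w1 p = w2 p.
Proof.
  intros [_ w1_add] [_ w2_add] l1 r1 l2 r2 p.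
  now rewrite (additive_sdp_map_eq w1 w1_add l1 r1), (additive_sdp_map_eq w2 w2_add l2 r2).
Qed.

Lemma sum_map_morph_iff :
  u (azero A) = uzero -> v uzero = uzero ->
  is_morph (fun p : sdp A => uop (u (sdp_fst p)) (v (sdp_snd p))) <->
  (forall p q : sdp A,
     uop (u (aphi A (sdp_fst p) (sdp_snd p) (sdp_fst q) (sdp_snd q)))
         (v (uop (sdp_snd p) (sdp_snd q)))
     = uop (uop (u (sdp_fst p)) (v (sdp_snd p)))
           (uop (u (sdp_fst q)) (v (sdp_snd q)))).
Proof.
  intros u0 v0; split.
  - intros [_ w_add]; exact w_add.
  - intros compat; split; [| exact compat].
    change (uop (u (azero A)) (v uzero) = uzero).
    now rewrite u0, v0, uop0l.
Qed.

End MorphismsOut.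

Section MorphismsIn.
Variables (Z : umagma) (f : Z -> X_magma A) (g : Z -> B).
Hypotheses (f0 : f uzero = azero A) (g0 : g uzero = uzero).

Lemma pair_map_in_sdp :
  (forall z1 z2, f (uop z1 z2) = aphi A (f z1) (g z1) (f z2) (g z2)) ->
  forall z, phi00 A (f z) (g z) = f z.
Proof.
  intros f_add z; unfold phi00.
  rewrite <- (ax2a A), <- f0, <- g0, <- f_add.
  now rewrite uop0r.
Qed.

Lemma pair_map_morph_iff :
  (forall a b, g (uop a b) = uop (g a) (g b)) ->
  (exists H : forall z, phi00 A (f z) (g z) = f z,
     is_morph (fun z => (exist _ (f z, g z) (H z) : sdp A))) <->
  (forall z1 z2, f (uop z1 z2) = aphi A (f z1) (g z1) (f z2) (g z2)).
Proof.
  intros g_add; split.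
  - intros [H [_ pair_add]] z1 z2.
    exact (f_equal (fun p : sdp A => sdp_fst p) (pair_add z1 z2)).
  - intros f_add.
    exists (pair_map_in_sdp f_add); split; [| intros a b]; apply sdp_eq; simpl.
    + now rewrite f0, g0.
    + now rewrite f_add, g_add.
Qed.

End MorphismsIn.

End SemidirectProduct.

Theorem proposition4p2 (B : umagma) (A : action B) :
  (* (1) *)
  (forall (Z : umagma) (u : X_magma A -> Z) (v : B -> Z),
     is_morph u -> is_morph v ->
     (* at most one such morphism w *)
     (forall w1 w2 : sdp A -> Z,
        is_morph w1 -> is_morph w2 ->
        (forall x, w1 (sdp_inl A x) = u x) -> (forall b, w1 (sdp_inr A b) = v b) ->
        (forall x, w2 (sdp_inl A x) = u x) -> (forall b, w2 (sdp_inr A b) = v b) ->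
        forall p, w1 p = w2 p) /\
     (* if it exists, w(x,b) = u(x) + v(b) *)
     (forall w : sdp A -> Z,
        is_morph w ->
        (forall x, w (sdp_inl A x) = u x) -> (forall b, w (sdp_inr A b) = v b) ->
        forall p, w p = uop (u (sdp_fst p)) (v (sdp_snd p))) /\
     (* the map (x,b) |-> u(x) + v(b) is a morphism iff the compatibility identity *)
     (is_morph (fun p : sdp A => uop (u (sdp_fst p)) (v (sdp_snd p))) <->
      (forall p q : sdp A,
         uop (u (aphi A (sdp_fst p) (sdp_snd p) (sdp_fst q) (sdp_snd q)))
             (v (uop (sdp_snd p) (sdp_snd q)))
         = uop (uop (u (sdp_fst p)) (v (sdp_snd p)))
               (uop (u (sdp_fst q)) (v (sdp_snd q)))))) /\
  (* (2) *)
  (forall (Z : umagma) (f : Z -> X_magma A) (g : Z -> B),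
     f uzero = azero A -> is_morph g ->
     ((exists H : forall z, phi00 A (f z) (g z) = f z,
         is_morph (fun z => (exist _ (f z, g z) (H z) : sdp A))) <->
      (forall z1 z2, f (uop z1 z2) = aphi A (f z1) (g z1) (f z2) (g z2)))).
Proof.
  split.
  - intros Z u v [u0 _] [v0 _]; split; [| split].
    + apply sdp_morph_unique.
    + intros w [_ w_add]; apply additive_sdp_map_eq, w_add.
    + apply sum_map_morph_iff; assumption.
  - intros Z f g f0 [g0 g_add].
    apply pair_map_morph_iff; assumption.
Qed.
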